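(* Let $\mathbb{X}$ be a real Banach space such that $\operatorname{Sm}\mathbb{X}$ is a dense $G_\delta$ subset of $\mathbb{X}$, and let $H=\{x\in\mathbb{X}:\varphi(x)=c\}$ be a hyperplane not passing through the origin (with $\varphi$ a non-zero bounded linear functional and $c\neq0$). If a bounded linear operator $T:\mathbb{X}\to\mathbb{X}$ preserves Birkhoff–James orthogonality at each point of $H$, then $T$ is a scalar multiple of an isometry.
   Context: $u\perp_B v$ means $\|u+\lambda v\|\ge\|u\|$ for all real $\lambda$. $T$ preserves Birkhoff–James orthogonality at $x$ if $x\perp_B v$ implies $Tx\perp_B Tv$ for all $v$. For non-zero $z$, $J(z)=\{f\in\mathbb{X}^*:\|f\|=1,\ f(z)=\|z\|\}$; $z$ is smooth if $J(z)$ is a singleton; $\operatorname{Sm}\mathbb{X}$ is the set of smooth points. ''Scalar multiple of an isometry'': there is $\lambda\ge0$ with $\|Tx\|=\lambda\|x\|$ for all $x$. *)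

From HB Require Import structures.
From mathcomp Require Import all_boot all_order all_algebra.
From mathcomp Require Import all_classical all_reals all_analysis.
From mathcomp Require Import borel_hierarchy.
Set Implicit Arguments. Unset Strict Implicit. Unset Printing Implicit Defensive.
Import Order.TTheory GRing.Theory Num.Theory numFieldNormedType.Exports.
Local Open Scope classical_set_scope.
Local Open Scope ring_scope.

Definition BJ_orth {R : realType} {X : normedModType R} (u v : X) : Prop :=
  forall l : R, `|u| <= `|u + l *: v|.

Definition preserves_BJ_at {R : realType} {X : normedModType R}
  (T : X -> X) (x : X) : Prop :=
  forall v : X, BJ_orth x v -> BJ_orth (T x) (T v).

Definition is_linear_fun {R : realType} {X Y : normedModType R} (f : X -> Y) : Prop :=
  forall (a : R) (x y : X), f (a *: x + y) = a *: f x + f y.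

Definition bounded_linear {R : realType} {X Y : normedModType R} (f : X -> Y) : Prop :=
  is_linear_fun f /\ continuous f.

Definition functional_norm {R : realType} {X : normedModType R} (f : X -> R) : R :=
  sup [set `|f x| | x in [set x : X | `|x| <= 1]].

Definition Jset {R : realType} {X : normedModType R} (z : X) : set (X -> R) :=
  [set f | bounded_linear (f : X -> R^o) /\ functional_norm f = 1 /\ f z = `|z|].

Definition smooth_point {R : realType} {X : normedModType R} (z : X) : Prop :=
  z <> 0 /\ exists f : X -> R, Jset z = [set f].

Definition Sm {R : realType} (X : normedModType R) : set X :=
  [set z | smooth_point z].
Arguments Sm {R} X.

Definition scalar_mult_isometry {R : realType} {X : normedModType R} (T : X -> X) : Prop :=
  exists l : R, 0 <= l /\ forall x : X, `|T x| = l * `|x|.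

From HB Require Import structures.
From mathcomp Require Import all_boot all_order all_algebra.
From mathcomp Require Import all_classical all_reals all_analysis.
From mathcomp Require Import borel_hierarchy.
From mathcomp Require Import ring lra.
Import Order.TTheory GRing.Theory Num.Theory numFieldNormedType.Exports.
Local Open Scope classical_set_scope.
Local Open Scope ring_scope.
Set Implicit Arguments. Unset Strict Implicit.

(* For fixed u, w the map s |-> `|u + s w| is convex, so it has a right derivative
   d(u, w) at 0, and u is Birkhoff-James orthogonal to w - (d(u, w) / `|u|) u.  If T
   preserves orthogonality at u, transporting this orthogonality gives
   `|T (u + h w)| >= (`|T u| / `|u|) (`|u| + h d(u, w)) >= (`|T u| / `|u|) `|u + h w| - o(h),
   so the ratio `|T x| / `|x| has nonnegative lower right Dini derivative along every
   segment on which T preserves orthogonality, and hence is nondecreasing there.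
   By homogeneity T preserves orthogonality on the open set [phi <> 0]; comparing
   points of one half-space along segments, and x with -x, shows that the ratio is a
   constant lambda there, and continuity extends `|T x| = lambda `|x| to the kernel. *)

Section LinearFun.
Variables (R : realType) (X Y : normedModType R) (f : X -> Y).
Hypothesis f_lin : is_linear_fun f.

Lemma linfunD x y : f (x + y) = f x + f y.
Proof. by have := f_lin 1 x y; rewrite !scale1r. Qed.

Lemma linfun0 : f 0 = 0.
Proof. by apply/(addrI (f 0)); rewrite -linfunD !addr0. Qed.

Lemma linfunZ (a : R) x : f (a *: x) = a *: f x.
Proof. by have := f_lin a x 0; rewrite !addr0 linfun0 addr0. Qed.

Lemma linfunN x : f (- x) = - f x.
Proof. by rewrite -scaleN1r linfunZ scaleN1r. Qed.

End LinearFun.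

Section NormRightDerivative.
Variables (R : realType) (X : normedModType R).
Implicit Types (u w : X) (s t : R).

Lemma norm_secant_le u w s t : 0 < s -> s <= t ->
  t * (`|u + s *: w| - `|u|) <= s * (`|u + t *: w| - `|u|).
Proof.
move=> s0 st; have t0 : 0 < t := lt_le_trans s0 st.
have E : t *: (u + s *: w) = (t - s) *: u + s *: (u + t *: w).
  by rewrite !scalerDr !scalerA scalerBl (mulrC t s) addrA subrK.
have := ler_normD ((t - s) *: u) (s *: (u + t *: w)).
rewrite -E !normrZ (gtr0_norm t0) (gtr0_norm s0) ger0_norm ?subr_ge0 //; lra.
Qed.

Lemma norm_secant_neg_le u w s t : s < 0 -> 0 < t ->
  s * (`|u + t *: w| - `|u|) <= t * (`|u + s *: w| - `|u|).
Proof.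
move=> s0 t0.
have E : (t - s) *: u = t *: (u + s *: w) + (- s) *: (u + t *: w).
  rewrite !scalerDr !scalerA scalerBl (mulrC t s) !mulNr !scaleNr.
  by rewrite addrACA subrr addr0.
have := ler_normD (t *: (u + s *: w)) ((- s) *: (u + t *: w)).
rewrite -E !normrZ (gtr0_norm t0) normrN (ltr0_norm s0).
rewrite gtr0_norm ?subr_gt0 ?(lt_trans s0 t0) //; lra.
Qed.

Definition norm_secants u w : set R :=
  [set (`|u + s *: w| - `|u|) / s | s in [set s | 0 < s]].

(* By convexity of [s |-> `|u + s *: w|] this infimum is its right derivative at [0]. *)
Definition norm_rderiv u w : R := inf (norm_secants u w).

Lemma has_inf_norm_secants u w : has_inf (norm_secants u w).
Proof.
split; first by exists ((`|u + 1 *: w| - `|u|) / 1), 1 => //=; rewrite ltr01.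
exists (- `|w|) => _ [s /= s0 <-]; rewrite ler_pdivlMr //.
have := ler_normB (u + s *: w) (s *: w); rewrite addrK normrZ gtr0_norm //; lra.
Qed.

Lemma norm_rderiv_le_secant u w s : 0 < s ->
  s * norm_rderiv u w <= `|u + s *: w| - `|u|.
Proof.
move=> s0; rewrite mulrC -ler_pdivlMr //.
by apply: ge_inf; [case: (has_inf_norm_secants u w) | exists s].
Qed.

Lemma norm_addZ_ge u w s : `|u| + s * norm_rderiv u w <= `|u + s *: w|.
Proof.
have [s0|s0|->] := ltgtP s 0; last by rewrite mul0r scale0r !addr0.
- suff : (`|u + s *: w| - `|u|) / s <= norm_rderiv u w.
    by rewrite ler_ndivrMr // mulrC; lra.
  apply: lb_le_inf; first by case: (has_inf_norm_secants u w).
  move=> _ [t /= t0 <-]; rewrite ler_ndivrMr // mulrAC ler_pdivrMr //.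
  have := norm_secant_neg_le u w s0 t0; lra.
- have := norm_rderiv_le_secant u w s0; lra.
Qed.

Lemma norm_comb_ge u w a b : a * `|u| + b * norm_rderiv u w <= `|a *: u + b *: w|.
Proof.
have pos_comb a' : 0 < a' -> a' * `|u| + b * norm_rderiv u w <= `|a' *: u + b *: w|.
  move=> a'0; have ba : a' * (b / a') = b by rewrite mulrC divfK // gt_eqF.
  rewrite -{2}ba -scalerA -scalerDr normrZ gtr0_norm //.
  have := ler_wpM2l (ltW a'0) (norm_addZ_ge u w (b / a')).
  by rewrite mulrDr mulrA ba.
(* shift [a] into the positive range, paying [t * `|u|] by the triangle inequality *)
set t := `|a| + 1.
have t0 : 0 < t by rewrite ltr_pwDr.
have at0 : 0 < a + t by have := ler_norm (- a); rewrite normrN /t; lra.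
have := pos_comb _ at0; rewrite scalerDl addrAC.
have := ler_normD (a *: u + b *: w) (t *: u); rewrite normrZ gtr0_norm //; lra.
Qed.

Lemma norm_addZ_le u w e : 0 < e -> exists2 s0, 0 < s0 &
  forall h, 0 < h <= s0 -> `|u + h *: w| <= `|u| + h * (norm_rderiv u w + e).
Proof.
move=> e0.
have [_ [s0 /= s00 <-] hq] := inf_adherent e0 (has_inf_norm_secants u w).
exists s0 => // h /andP[h0 hs].
set q := (`|u + s0 *: w| - `|u|) / s0 in hq.
have qs : `|u + s0 *: w| - `|u| = q * s0 by rewrite /q divfK // gt_eqF.
have := norm_secant_le u w h0 hs; rewrite qs => secant_h.
have secant_s0 := ler_wpM2l (ltW h0) (ler_wpM2r (ltW s00) (ltW hq)).
have : s0 * (`|u + h *: w| - `|u| - h * (norm_rderiv u w + e)) <= 0 by lra.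
rewrite pmulr_rle0 //; lra.
Qed.

End NormRightDerivative.

Section BirkhoffJames.
Variables (R : realType) (X : normedModType R).

Lemma BJ_orthZl (x v : X) (k : R) : k != 0 -> BJ_orth (k *: x) v <-> BJ_orth x v.
Proof.
suff orthZ (y : X) (a : R) : a != 0 -> BJ_orth y v -> BJ_orth (a *: y) v.
  move=> k0; split; last exact: orthZ.
  by move=> /(orthZ _ k^-1); rewrite scalerA mulVf // scale1r; apply; rewrite invr_neq0.
move=> a0 yv l; have -> : a *: y + l *: v = a *: (y + (l / a) *: v).
  by rewrite scalerDr scalerA mulrC divfK.
by rewrite !normrZ ler_wpM2l.
Qed.

(* By [norm_comb_ge] the functional [a u + b w |-> a `|u| + b norm_rderiv u w] on the
   span of [u] and [w] is dominated by the norm, and this vector lies in its kernel. *)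
Lemma BJ_orth_rderiv (u w : X) : 0 < `|u| ->
  BJ_orth u (w - (norm_rderiv u w / `|u|) *: u).
Proof.
move=> u0 l; set a := norm_rderiv u w / `|u|.
have -> : u + l *: (w - a *: u) = (1 - l * a) *: u + l *: w.
  by rewrite scalerBr scalerA scalerBl scale1r addrCA addrC.
apply: le_trans (norm_comb_ge _ _ _ _).
have -> : l * norm_rderiv u w = l * a * `|u| by rewrite -mulrA divfK // gt_eqF.
lra.
Qed.

End BirkhoffJames.

Section PreservingOperator.
Variables (R : realType) (X : normedModType R) (T : X -> X).
Hypothesis T_lin : is_linear_fun T.

Lemma preserves_BJ_norm_ge (u w : X) (h : R) :
  0 < `|u| -> preserves_BJ_at T u -> 0 < h ->
  `|T u| / `|u| * (`|u| + h * norm_rderiv u w) <= `|T (u + h *: w)|.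
Proof.
move=> u0 Tu h0; set a := norm_rderiv u w / `|u|; set k := 1 + h * a.
have -> : `|u| + h * norm_rderiv u w = k * `|u|.
  by rewrite /k /a mulrDl mul1r -mulrA divfK // gt_eqF.
have [k0|k0] := ltP 0 k; last first.
  apply: le_trans (normr_ge0 _); apply: mulr_ge0_le0; first exact: divr_ge0.
  exact: mulr_le0_ge0 k0 (ltW u0).
set l := h / k; have kl : k * l = h by rewrite /l mulrC divfK // gt_eqF.
have -> : u + h *: w = k *: (u + l *: (w - a *: u)).
  rewrite scalerDr !scalerA kl scalerBr scalerA addrCA -scalerBl /k addrK.
  by rewrite scale1r addrC.
rewrite linfunZ // normrZ gtr0_norm // linfunD // linfunZ //.
rewrite mulrCA divfK ?gt_eqF //; apply: ler_wpM2l; first exact: ltW.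
exact: Tu _ (BJ_orth_rderiv w u0) l.
Qed.

Lemma preserves_BJ_norm_ratio_Dini (u w : X) : 0 < `|u| -> preserves_BJ_at T u ->
  forall e, 0 < e -> exists2 d, 0 < d & forall h, 0 < h < d ->
    `|T u| / `|u| - e * h <= `|T (u + h *: w)| / `|u + h *: w|.
Proof.
move=> u0 Tu e e0.
set N := `|u| in u0 *; set r := `|T u| / N.
have r0 : 0 <= r by rewrite /r divr_ge0 // ltW.
set eps := e * N / (2 * (r + 1)).
have eps0 : 0 < eps by rewrite /eps divr_gt0 ?mulr_gt0 //; lra.
have r_eps : (r + 1) * eps = e * N / 2 by rewrite /eps; field; lra.
have [s0 s00 near_u] := norm_addZ_le u w eps0.
have w0 : 0 < 2 * (`|w| + 1) by rewrite mulr_gt0 // ltr_pwDr.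
exists (Num.min s0 (N / (2 * (`|w| + 1)))); first by rewrite lt_min s00 divr_gt0.
move=> h /andP[h0]; rewrite lt_min => /andP[hs hN].
have := near_u h; rewrite h0 ltW //= -/N => /(_ isT) up.
have := preserves_BJ_norm_ge w u0 Tu h0; rewrite -/N -/r => low.
have hw : h * (2 * (`|w| + 1)) < N by rewrite -ltr_pdivlMr.
have Nh : N / 2 <= `|u + h *: w|.
  have := ler_normB (u + h *: w) (h *: w); rewrite addrK normrZ gtr0_norm // -/N => ?.
  lra.
rewrite ler_pdivlMr; last lra.
have F1 : r * (`|u + h *: w| - h * eps) <= r * (N + h * norm_rderiv u w).
  by apply: ler_wpM2l => //; lra.
have F2 := ler_wpM2l (ltW e0) Nh.
have F3 : h * (r * eps) <= h * (e * `|u + h *: w|) by apply: ler_wpM2l; [exact: ltW | lra].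
lra.
Qed.

End PreservingOperator.

Lemma continuous_line (R : realType) (X : normedModType R) (x w : X) :
  continuous (fun s : R => x + s *: w).
Proof.
by move=> s; apply: cvgD; [exact: cvg_cst | apply: cvgZ; [exact: cvg_id | exact: cvg_cst]].
Qed.

Lemma continuous_norm_line (R : realType) (X : normedModType R) (f : X -> X) (x w : X) :
  continuous f -> continuous (fun s : R => `|f (x + s *: w)|).
Proof.
move=> f_cont t; apply: cvg_norm.
exact: cvg_comp _ _ (@continuous_line _ _ x w t) (f_cont _).
Qed.

Section RightDini.
Variables (R : realType) (g : R -> R).
Hypothesis g_cont : forall t, 0 <= t <= 1 -> {for t, continuous g}.
Hypothesis g_Dini : forall t, 0 <= t < 1 -> forall e, 0 < e -> exists2 d, 0 < d &
  forall h, 0 < h < d -> g t - e * h <= g (t + h).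

Section RightDiniApprox.
Variables (e : R).
Hypothesis e0 : 0 < e.

Let good t := t <= 1 /\ forall s, 0 <= s <= t -> g 0 - e * s <= g s.

Let good0 : good 0.
Proof.
split=> [|s]; first exact: ler01.
by rewrite -eq_le => /eqP <-; rewrite mulr0 subr0.
Qed.

Let has_sup_good : has_sup good.
Proof. by split; [exists 0 | exists 1 => t []]. Qed.

Let S := sup good.

Let S_ge0 : 0 <= S.
Proof. exact: sup_upper_bound has_sup_good _ good0. Qed.

Let S_le1 : S <= 1.
Proof. by apply: ge_sup; [case: has_sup_good | move=> t []]. Qed.

Let good_below s : 0 <= s < S -> g 0 - e * s <= g s.
Proof.
move=> /andP[s0 sS].
have Ss : 0 < S - s by rewrite subr_gt0.
have [t [_ gt] St] := sup_adherent Ss has_sup_good.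
by apply: gt; rewrite s0 ltW //; move: St; rewrite -/S opprB addrC subrK.
Qed.

(* The defining inequality passes to [S] by continuity of [g] from the left. *)
Let good_S : good S.
Proof.
split=> // s /andP[s0]; rewrite le_eqVlt => /predU1P[->|sS]; last exact/good_below/andP.
have [->|S_neq0] := eqVneq S 0; first by rewrite mulr0 subr0.
have S_gt0 : 0 < S by rewrite lt_neqAle eq_sym S_neq0 S_ge0.
have gap_cont : (fun t => g t - (g 0 - e * t)) @ S^'- --> g S - (g 0 - e * S).
  apply: cvg_at_left_filter; apply: cvgB; first by apply: g_cont; rewrite S_ge0 S_le1.
  by apply: cvgB; [exact: cvg_cst | apply: cvgM; [exact: cvg_cst | exact: cvg_id]].
rewrite -subr_ge0; apply: (closed_cvg [set x : R | 0 <= x] (@closed_ge R 0) _ _ gap_cont).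
near=> t; rewrite /= subr_ge0; apply: good_below; apply/andP; split.
  by near: t; apply: nbhs_left_ge.
by near: t; apply: nbhs_left_lt.
Unshelve. all: by end_near.
Qed.

(* If [S < 1], the Dini condition at [S] pushes the good interval beyond [S]. *)
Let S_eq1 : S = 1.
Proof.
apply/eqP; rewrite eq_le S_le1 leNgt; apply/negP => S1.
have [d d0 Dini_S] : exists2 d, 0 < d & forall h, 0 < h < d -> g S - e * h <= g (S + h).
  by apply: g_Dini; rewrite ?S_ge0.
set m := Num.min d (1 - S).
have m0 : 0 < m by rewrite lt_min d0 subr_gt0 S1.
have := le_min m d (1 - S); rewrite lexx => /esym/andP[md mS].
suff : good (S + m / 2) by move/(sup_upper_bound has_sup_good); rewrite -/S; lra.
split=> [|s /andP[s0 sSm]]; first lra.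
have [sS|Ss] := leP s S; first by apply: good_S.2; rewrite s0.
have := Dini_S (s - S); rewrite [S + _]addrC subrK => Dini_s.
have := good_S.2 S; rewrite S_ge0 lexx => /(_ isT) gS.
have : g S - e * (s - S) <= g s by apply: Dini_s; apply/andP; split; lra.
lra.
Qed.

Lemma right_Dini_approx : g 0 - e <= g 1.
Proof. by have [_] := good_S; rewrite S_eq1 => /(_ 1); rewrite mulr1 ler01 lexx; apply. Qed.

End RightDiniApprox.

Lemma right_Dini_le01 : g 0 <= g 1.
Proof. by apply/ler_addgt0Pr => e e0; have := right_Dini_approx e0; lra. Qed.

End RightDini.

Section OffKernel.
Variables (R : realType) (X : normedModType R) (phi : X -> R) (T : X -> X).
Hypotheses (phi_lin : is_linear_fun (phi : X -> R^o)) (T_lin : is_linear_fun T).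

Let phiZ (a : R) (x : X) : phi (a *: x) = a * phi x := linfunZ phi_lin a x.

Lemma preserves_BJ_off_kernel (c : R) : c != 0 ->
  (forall x, phi x = c -> preserves_BJ_at T x) ->
  forall x, phi x != 0 -> preserves_BJ_at T x.
Proof.
move=> c0 T_pres x px v xv; set k := c / phi x.
have k0 : k != 0 by rewrite mulf_neq0 ?invr_neq0.
have pk : phi (k *: x) = c by rewrite phiZ /k divfK.
have := T_pres _ pk v; rewrite linfunZ // !BJ_orthZl //; exact.
Qed.

Hypothesis T_cont : continuous T.
Hypothesis T_pres : forall x, phi x != 0 -> preserves_BJ_at T x.

(* The segment from [x] to [y] avoids the kernel, so [right_Dini_le01] applies along it. *)
Lemma norm_ratio_le_same_side (x y : X) : 0 < phi x * phi y ->
  `|T x| / `|x| <= `|T y| / `|y|.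
Proof.
move=> xy; set w := y - x.
pose g t := `|T (x + t *: w)| / `|x + t *: w|.
have phi_seg t : 0 <= t <= 1 -> phi (x + t *: w) != 0.
  move=> /andP[t0 t1].
  have -> : phi (x + t *: w) = (1 - t) * phi x + t * phi y.
    by rewrite linfunD // phiZ /w linfunD // linfunN //; ring.
  suff : 0 < phi x * ((1 - t) * phi x + t * phi y).
    by apply: contraTneq => ->; rewrite mulr0 ltxx.
  have [t_lt1|t_ge1] := ltP t 1; last first.
    have -> : t = 1 by apply/eqP; rewrite eq_le t1 t_ge1.
    by rewrite subrr mul0r add0r mul1r.
  have px : phi x != 0 by apply: contraTneq xy => ->; rewrite mul0r ltxx.
  have : 0 < (1 - t) * (phi x * phi x).
    by rewrite mulr_gt0 ?subr_gt0 // -expr2 exprn_even_gt0.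
  have : 0 <= t * (phi x * phi y) by rewrite mulr_ge0 // ltW.
  lra.
have seg_neq0 t : 0 <= t <= 1 -> x + t *: w != 0.
  by move=> /phi_seg; apply: contra_neq => ->; rewrite linfun0.
have -> : `|T x| / `|x| = g 0 by rewrite /g scale0r addr0.
have -> : `|T y| / `|y| = g 1 by rewrite /g scale1r /w addrC subrK.
apply: right_Dini_le01 => [t /seg_neq0 seg_t|t /andP[t0 t1] e e0].
  apply: cvgM; first exact: continuous_norm_line.
  apply: cvgV; first by rewrite normr_eq0.
  exact: (@continuous_norm_line _ _ id x w (fun y => cvg_id)).
have t01 : 0 <= t <= 1 by rewrite t0 ltW.
have seg_gt0 : 0 < `|x + t *: w| by rewrite normr_gt0 seg_neq0.
have [d d0 Dini] :=
  preserves_BJ_norm_ratio_Dini T_lin w seg_gt0 (T_pres (phi_seg _ t01)) e0.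
by exists d => // h /Dini; rewrite /g scalerDl addrA.
Qed.

Lemma norm_ratio_eq_off_kernel (x y : X) : phi x != 0 -> phi y != 0 ->
  `|T x| / `|x| = `|T y| / `|y|.
Proof.
wlog xy : x / 0 < phi x * phi y => [sym px py|px py].
  have [|xy] := ltP 0 (phi x * phi y); first by move=> ?; exact: sym.
  have -> : `|T x| / `|x| = `|T (- x)| / `|- x| by rewrite linfunN // !normrN.
  apply: sym; rewrite ?linfunN // ?oppr_eq0 //.
  by rewrite mulNr oppr_gt0 lt_neqAle mulf_neq0.
by apply/eqP; rewrite eq_le !norm_ratio_le_same_side // mulrC.
Qed.

(* Continuity carries the identity from the dense set [phi <> 0] to the kernel. *)
Lemma norm_eq_ratio_mul (z : X) : phi z != 0 ->
  forall x, `|T x| = `|T z| / `|z| * `|x|.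
Proof.
move=> pz x; set lam := `|T z| / `|z|.
have off y : phi y != 0 -> `|T y| = lam * `|y|.
  move=> py; have y0 : `|y| != 0.
    by rewrite normr_eq0; apply: contra_neq py => ->; rewrite linfun0.
  by rewrite /lam -(norm_ratio_eq_off_kernel py pz) divfK.
have [px|] := eqVneq (phi x) 0; last exact: off.
pose f s := `|T (x + s *: z)| - lam * `|x + s *: z|.
suff : f 0 = 0 by rewrite /f scale0r addr0 => /eqP; rewrite subr_eq0 => /eqP.
have f_cont : {for 0, continuous (fun s : R => `|T (x + s *: z)| - lam * `|x + s *: z|)}.
  apply: cvgB; first exact: continuous_norm_line.
  apply: cvgM; first exact: cvg_cst.
  exact: (@continuous_norm_line _ _ id x z (fun y => cvg_id)).
have {}f_cont : f @ 0^'+ --> f 0 := cvg_at_right_filter f_cont.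
have f_off : f @ 0^'+ --> 0.
  apply: cvg_near_cst; near=> s.
  have s0 : 0 < s by near: s; exact: nbhs_right_gt.
  apply/eqP; rewrite subr_eq0; apply/eqP/off.
  by rewrite linfunD // phiZ px add0r mulf_neq0 // gt_eqF.
exact: cvg_unique _ f_cont f_off.
Unshelve. all: by end_near.
Qed.

End OffKernel.

Theorem mainTheorem8 (R : realType) (X : completeNormedModType R)
  (phi : X -> R) (c : R) (T : X -> X) :
  Gdelta (Sm X) -> dense (Sm X) ->
  bounded_linear (phi : X -> R^o) -> (exists x : X, phi x <> 0) -> c <> 0 ->
  bounded_linear T ->
  (forall x : X, phi x = c -> preserves_BJ_at T x) ->
  scalar_mult_isometry T.
Proof.
move=> _ _ [phi_lin _] [z /eqP phi_z] /eqP c0 [T_lin T_cont] T_pres_H.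
have T_pres := preserves_BJ_off_kernel phi_lin T_lin c0 T_pres_H.
exists (`|T z| / `|z|); split; first by rewrite divr_ge0.
exact: (norm_eq_ratio_mul phi_lin T_lin T_cont T_pres phi_z).
Qed.
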